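(* Let $m\in\{1,2\}$, $K>0$, $\gamma=3$, and let $(\rho,u)$ be a smooth solution ($\rho>0$, $r>0$) of the radially symmetric isentropic Euler equations $$(r^m\rho)_t+(r^m\rho u)_r=0,\qquad (r^m\rho u)_t+(r^m\rho u^2)_r+r^m p_r=0,\qquad p=K\rho^\gamma,$$ in the supersonic expanding regime $0<c_1<c_2$. Then: (i) If the 1-wave is rarefaction (R), the 2-wave can only change from compression (C) to rarefaction (R); if the 2-wave is rarefaction, the 1-wave can only change from C to R. (ii) If the 1-wave is compression (C), the 2-wave can only change from R to C; if the 2-wave is compression, the 1-wave can only change from R to C.
   Context: Here $h=\sqrt{K\gamma}\,\rho^{(\gamma-1)/2}$, $c_1=u-h$, $c_2=u+h$, and the gradient variables are $$\alpha=u_r+\tfrac{2}{\gamma-1}h_r+\tfrac{m}{r}\tfrac{hu}{c_2},\qquad \beta=u_r-\tfrac{2}{\gamma-1}h_r-\tfrac{m}{r}\tfrac{hu}{c_1}.$$ The solution is called 1-rarefaction (1-compression) at a point if $\beta>0$ ($\beta<0$) there, and 2-rarefaction (2-compression) if $\alpha>0$ ($\alpha<0$). Characteristic flow maps: $\partial_t\xi(r_0,t)=c_1(\xi(r_0,t),t)$, $\partial_t\psi(r_0,t)=c_2(\psi(r_0,t),t)$, $\xi(r_0,0)=\psi(r_0,0)=r_0$. ''The 2-wave changes from R to C'' means: there are $r_0$, $t^*$ and $\varepsilon>0$ such that, writing $g(t)=\alpha(\psi(r_0,t),t)$, we have $g(t^* )=0$, $g>0$ on $(t^*-\varepsilon,t^*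 )$ and $g<0$ on $(t^*,t^*+\varepsilon)$ (change from C to R: the reverse signs); the statement ''if the 1-wave is R then the 2-wave can only change from C to R'' means no R-to-C change of the 2-wave occurs at a time $t^*$ with $\beta(\psi(r_0,t^* ),t^* )>0$. The analogous statements for the 1-wave use $\beta$ along $\xi(r_0,\cdot)$, and with the roles of R/C (signs) of the other wave exchanged accordingly. *)

From Stdlib Require Import Reals Lra.
From Coquelicot Require Import Coquelicot.
Open Scope R_scope.

Definition partial_r (f : R -> R -> R) (r t : R) : R := Derive (fun x => f x t) r.
Definition partial_t (f : R -> R -> R) (r t : R) : R := Derive (fun s => f r s) t.

Definition open_rt (Om : R -> R -> Prop) : Prop :=
  forall r t, Om r t -> exists e, 0 < e /\
    forall r' t', Rabs (r' - r) < e -> Rabs (t' - t) < e -> Om r' t'.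

Definition cont_on (Om : R -> R -> Prop) (f : R -> R -> R) : Prop :=
  forall r t, Om r t -> continuous (fun p : R * R => f (fst p) (snd p)) (r, t).

Fixpoint Ck_on (n : nat) (Om : R -> R -> Prop) (f : R -> R -> R) : Prop :=
  match n with
  | O => cont_on Om f
  | S k => cont_on Om f /\
           (forall r t, Om r t -> ex_derive (fun x => f x t) r /\
                                  ex_derive (fun s => f r s) t) /\
           Ck_on k Om (partial_r f) /\ Ck_on k Om (partial_t f)
  end.

Definition smooth_on (Om : R -> R -> Prop) (f : R -> R -> R) : Prop :=
  forall n, Ck_on n Om f.

Definition pressure (K gamma : R) (rho : R -> R -> R) (r t : R) : R :=
  K * Rpower (rho r t) gamma.

Definition hh (K gamma : R) (rho : R -> R -> R) (r t : R) : R :=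
  sqrt (K * gamma) * Rpower (rho r t) ((gamma - 1) / 2).

Definition cc1 (K gamma : R) (rho u : R -> R -> R) (r t : R) : R :=
  u r t - hh K gamma rho r t.
Definition cc2 (K gamma : R) (rho u : R -> R -> R) (r t : R) : R :=
  u r t + hh K gamma rho r t.

Definition alpha (m : nat) (K gamma : R) (rho u : R -> R -> R) (r t : R) : R :=
  partial_r u r t + 2 / (gamma - 1) * partial_r (hh K gamma rho) r t
  + INR m / r * (hh K gamma rho r t * u r t / cc2 K gamma rho u r t).
Definition beta (m : nat) (K gamma : R) (rho u : R -> R -> R) (r t : R) : R :=
  partial_r u r t - 2 / (gamma - 1) * partial_r (hh K gamma rho) r t
  - INR m / r * (hh K gamma rho r t * u r t / cc1 K gamma rho u r t).

Definition radial_euler (m : nat) (K gamma : R) (rho u : R -> R -> R)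
    (Om : R -> R -> Prop) : Prop :=
  forall r t, Om r t ->
    partial_t (fun r t => r ^ m * rho r t) r t
      + partial_r (fun r t => r ^ m * rho r t * u r t) r t = 0 /\
    partial_t (fun r t => r ^ m * rho r t * u r t) r t
      + partial_r (fun r t => r ^ m * rho r t * (u r t) ^ 2) r t
      + r ^ m * partial_r (pressure K gamma rho) r t = 0.

Definition char_curve (Om : R -> R -> Prop) (c : R -> R -> R) (a b : R)
    (X : R -> R) : Prop :=
  forall t, a < t < b -> Om (X t) t /\ is_derive X t (c (X t) t).

(* The sign of g changes from + (R) to - (C) at ts. *)
Definition changes_R_to_C (g : R -> R) (ts : R) : Prop :=
  g ts = 0 /\ exists eps, 0 < eps /\
    (forall t, ts - eps < t < ts -> 0 < g t) /\
    (forall t, ts < t < ts + eps -> g t < 0).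

Definition changes_C_to_R (g : R -> R) (ts : R) : Prop :=
  g ts = 0 /\ exists eps, 0 < eps /\
    (forall t, ts - eps < t < ts -> g t < 0) /\
    (forall t, ts < t < ts + eps -> 0 < g t).

(* For gamma = 3 one has 2 / (gamma - 1) = 1 and h = sqrt (3 K) rho, and the Euler equations read
     u_t + u u_r + h h_r = 0,    h_t + u h_r + h u_r + m h u / r = 0.
   Differentiate alpha along a 2-characteristic (dr/dt = c2) and eliminate the time derivatives
   with these equations and their r-derivatives: wherever alpha = 0,
     d/dt alpha = m c1^2 beta / (2 r c2),
   and symmetrically d/dt beta = m c2^2 alpha / (2 r c1) along a 1-characteristic where beta = 0.
   In the supersonic regime 0 < c1 < c2 the factor is positive, so alpha can only cross zero
   upwards where beta > 0 and downwards where beta < 0, and likewise for beta. *)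

From Stdlib Require Import Reals Lra.
From Coquelicot Require Import Coquelicot.
Open Scope R_scope.

Lemma is_derive_pos_exists_neg_left (g : R -> R) (ts d eps : R) :
  is_derive g ts d -> 0 < d -> g ts = 0 -> 0 < eps ->
  exists t, ts - eps < t < ts /\ g t < 0.
Proof.
  intros Hd Hd_pos Hzero Heps. apply is_derive_Reals in Hd.
  destruct (Hd (d / 2)) as [del Hdel]; [lra |].
  assert (Hmin : 0 < Rmin del eps <= del /\ Rmin del eps <= eps).
  { split; [split |]; [apply Rmin_pos; [apply cond_pos | exact Heps] | apply Rmin_l | apply Rmin_r]. }
  set (h := - Rmin del eps / 2).
  assert (Hquot := Hdel h ltac:(unfold h; lra) ltac:(rewrite Rabs_left; unfold h; lra)).
  rewrite Hzero, Rminus_0_r in Hquot. apply Rabs_def2 in Hquot.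
  exists (ts + h). split; [unfold h; lra |].
  replace (g (ts + h)) with (g (ts + h) / h * h) by (field; unfold h; lra).
  assert (h < 0) by (unfold h; lra). nra.
Qed.

Lemma not_changes_R_to_C_of_is_derive_pos (g : R -> R) (ts d : R) :
  is_derive g ts d -> 0 < d -> ~ changes_R_to_C g ts.
Proof.
  intros Hd Hd_pos [Hzero [eps [Heps [Hleft _]]]].
  destruct (is_derive_pos_exists_neg_left g ts d eps Hd Hd_pos Hzero Heps) as [t [Ht Hneg]].
  specialize (Hleft t Ht). lra.
Qed.

Lemma not_changes_C_to_R_of_is_derive_neg (g : R -> R) (ts d : R) :
  is_derive g ts d -> d < 0 -> ~ changes_C_to_R g ts.
Proof.
  intros Hd Hd_neg [Hzero [eps [Heps [Hleft _]]]].
  destruct (is_derive_pos_exists_neg_left (fun t => - g t) ts (- d) eps) as [t [Ht Hneg]];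
    [exact (is_derive_opp g ts d Hd) | lra | rewrite Hzero; ring | exact Heps |].
  specialize (Hleft t Ht). lra.
Qed.

Lemma is_derive_eq (f : R -> R) (x l l' : R) : is_derive f x l -> l = l' -> is_derive f x l'.
Proof. intros Hf <-; exact Hf. Qed.

(* [X], [U], [H], [Ur], [Hr] are the traces of r, u, h, u_r, h_r along a curve of speed
   [c = U + sg H], and [Hrr], [Urr] the values of h_rr, u_rr at time [t]; the derivative
   hypotheses are the equations above and their r-derivatives, with d/dt = ∂_t + c ∂_r. *)
Lemma is_derive_transport_at_zero (mm sg t : R) (X H U Hr Ur : R -> R) (Hrr Urr : R) :
  sg = 1 \/ sg = -1 -> X t <> 0 -> U t + sg * H t <> 0 -> U t + - sg * H t <> 0 ->
  let c := U t + sg * H t in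
  is_derive X t c ->
  is_derive H t (Hr t * c - (U t * Hr t + H t * Ur t + mm * H t * U t / X t)) ->
  is_derive U t (Ur t * c - (U t * Ur t + H t * Hr t)) ->
  is_derive Hr t (Hrr * c - (2 * Ur t * Hr t + U t * Hrr + H t * Urr
                            + mm * ((Hr t * U t + H t * Ur t) / X t - H t * U t / X t ^ 2))) ->
  is_derive Ur t (Urr * c - (Ur t ^ 2 + U t * Urr + Hr t ^ 2 + H t * Hrr)) ->
  Ur t + sg * (Hr t + mm / X t * (H t * U t / (U t + sg * H t))) = 0 ->
  is_derive (fun s => Ur s + sg * (Hr s + mm / X s * (H s * U s / (U s + sg * H s)))) t
    (mm * (U t + - sg * H t) ^ 2 / (2 * X t * c)
     * (Ur t + - sg * (Hr t + mm / X t * (H t * U t / (U t + - sg * H t))))).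
Proof.
  intros Hsg HX Hc Hc' c dX dH dU dHr dUr Hzero.
  auto_derive.
  - repeat split; try (eexists; eassumption); auto.
  - rewrite (is_derive_unique (fun s : R => X s) _ _ dX), (is_derive_unique (fun s : R => H s) _ _ dH),
      (is_derive_unique (fun s : R => U s) _ _ dU), (is_derive_unique (fun s : R => Hr s) _ _ dHr),
      (is_derive_unique (fun s : R => Ur s) _ _ dUr).
    unfold c in *.
    destruct Hsg as [-> | ->].
    + replace (Ur t) with (- (Hr t + mm / X t * (H t * U t / (U t + 1 * H t)))) by lra.
      field. repeat split; auto; lra.
    + replace (Ur t) with (Hr t + mm / X t * (H t * U t / (U t + -1 * H t))) by lra.
      field. repeat split; auto; lra.
Qed.

Lemma open_rt_locally_2d Om r t : open_rt Om -> Om r t -> locally_2d Om r t.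
Proof.
  intros HO Hrt. destruct (HO r t Hrt) as [e [He Hball]].
  exists (mkposreal e He). intros; apply Hball; auto.
Qed.

Lemma open_rt_locally_r Om r t : open_rt Om -> Om r t -> locally r (fun x => Om x t).
Proof.
  intros HO Hrt. destruct (HO r t Hrt) as [e [He Hball]].
  exists (mkposreal e He). intros x Hx. apply Hball; [exact Hx |].
  rewrite Rminus_eq_0, Rabs_R0; exact He.
Qed.

Lemma char_curve_locally Om c a b X ts :
  char_curve Om c a b X -> a < ts < b -> locally ts (fun t => Om (X t) t).
Proof.
  intros HX Hts.
  assert (Hmin : 0 < Rmin (ts - a) (b - ts)) by (apply Rmin_pos; lra).
  exists (mkposreal _ Hmin). intros t Ht.
  change (Rabs (t - ts) < Rmin (ts - a) (b - ts)) in Ht. apply Rabs_def2 in Ht.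
  assert (Rmin (ts - a) (b - ts) <= ts - a) by apply Rmin_l.
  assert (Rmin (ts - a) (b - ts) <= b - ts) by apply Rmin_r.
  apply HX. lra.
Qed.

Lemma Ck_on_cont_on n Om f : Ck_on n Om f -> cont_on Om f.
Proof. destruct n as [| n]; intros Hf; [exact Hf | exact (proj1 Hf)]. Qed.

Lemma Ck_on_partial_r n Om f : Ck_on (S n) Om f -> Ck_on n Om (partial_r f).
Proof. intros Hf; apply Hf. Qed.

Lemma Ck_on_partial_t n Om f : Ck_on (S n) Om f -> Ck_on n Om (partial_t f).
Proof. intros Hf; apply Hf. Qed.

Lemma Ck_on_is_derive_r n Om f r t :
  Ck_on (S n) Om f -> Om r t -> is_derive (fun x => f x t) r (partial_r f r t).
Proof. intros Hf Hrt. apply Derive_correct, (proj1 (proj2 Hf) r t Hrt). Qed.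

Lemma Ck_on_is_derive_t n Om f r t :
  Ck_on (S n) Om f -> Om r t -> is_derive (fun s => f r s) t (partial_t f r t).
Proof. intros Hf Hrt. apply Derive_correct, (proj1 (proj2 Hf) r t Hrt). Qed.

Lemma is_derive_along_curve n Om f (X : R -> R) t0 l :
  open_rt Om -> Ck_on (S n) Om f -> Om (X t0) t0 -> is_derive X t0 l ->
  is_derive (fun t => f (X t) t) t0 (partial_r f (X t0) t0 * l + partial_t f (X t0) t0).
Proof.
  intros HO Hf Hpt HX.
  assert (Hdiff : differentiable_pt_lim f (X t0) t0
                    (partial_r f (X t0) t0) (partial_t f (X t0) t0)).
  { apply filterdiff_differentiable_pt_lim.
    eapply filterdiff_ext_lin; [apply is_derive_filterdiff with (dfx := partial_r f) |].
    - apply (locally_2d_locally (fun r t => is_derive (fun x => f x t) r (partial_r f r t))).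
      apply (locally_2d_impl Om); [| exact (open_rt_locally_2d _ _ _ HO Hpt)].
      apply locally_2d_forall. intros r t Hrt. exact (Ck_on_is_derive_r _ _ _ _ _ Hf Hrt).
    - exact (Ck_on_is_derive_t _ _ _ _ _ Hf Hpt).
    - exact (Ck_on_cont_on _ _ _ (Ck_on_partial_r _ _ _ Hf) _ _ Hpt).
    - intros p. reflexivity. }
  apply is_derive_Reals.
  replace (partial_r f (X t0) t0 * l + partial_t f (X t0) t0)
    with (partial_r f (X t0) t0 * l + partial_t f (X t0) t0 * 1) by ring.
  apply (derivable_pt_lim_comp_2d f X (fun t => t)); [exact Hdiff | | apply derivable_pt_lim_id].
  apply is_derive_Reals, HX.
Qed.

Lemma partial_r_partial_t n Om f r t : open_rt Om -> Ck_on (S (S n)) Om f -> Om r t ->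
  partial_r (partial_t f) r t = partial_t (partial_r f) r t.
Proof.
  intros HO Hf Hrt. apply Schwarz.
  - apply (locally_2d_impl Om); [| exact (open_rt_locally_2d _ _ _ HO Hrt)].
    apply locally_2d_forall. intros x s Hxs. repeat split.
    + exact (ex_intro _ _ (Ck_on_is_derive_r _ _ _ _ _ Hf Hxs)).
    + exact (ex_intro _ _ (Ck_on_is_derive_t _ _ _ _ _ Hf Hxs)).
    + exact (ex_intro _ _ (Ck_on_is_derive_r _ _ _ _ _ (Ck_on_partial_t _ _ _ Hf) Hxs)).
    + exact (ex_intro _ _ (Ck_on_is_derive_t _ _ _ _ _ (Ck_on_partial_r _ _ _ Hf) Hxs)).
  - apply continuity_2d_pt_filterlim,
      (Ck_on_cont_on _ _ _ (Ck_on_partial_r _ _ _ (Ck_on_partial_t _ _ _ Hf))), Hrt.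
  - apply continuity_2d_pt_filterlim,
      (Ck_on_cont_on _ _ _ (Ck_on_partial_t _ _ _ (Ck_on_partial_r _ _ _ Hf))), Hrt.
Qed.

Lemma INR_mult_pow_pred (m : nat) (x : R) :
  x <> 0 -> INR m * x ^ Nat.pred m = INR m * x ^ m / x.
Proof. intros Hx. destruct m as [| m]; simpl; field; exact Hx. Qed.

Lemma partial_r_pressure3 n K rho Om r t : open_rt Om -> Ck_on (S n) Om rho ->
  (forall r t, Om r t -> 0 < rho r t) -> Om r t ->
  partial_r (pressure K 3 rho) r t = K * 3 * rho r t ^ 2 * partial_r rho r t.
Proof.
  intros HO Hrho Hpos Hrt. unfold partial_r at 1.
  rewrite (Derive_ext_loc _ (fun x => K * rho x t ^ 3)).
  - apply is_derive_unique. auto_derive.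
    + eexists. exact (Ck_on_is_derive_r _ _ _ _ _ Hrho Hrt).
    + unfold partial_r. ring.
  - apply (filter_imp (fun x => Om x t)); [| exact (open_rt_locally_r _ _ _ HO Hrt)].
    intros x Hx. unfold pressure. rewrite <- Rpower_pow by auto.
    replace (INR 3) with 3 by (simpl; ring). reflexivity.
Qed.

Section RadialEuler.

Variables (m : nat) (K : R) (rho u : R -> R -> R) (Om : R -> R -> Prop).
Hypothesis K_pos : 0 < K.
Hypothesis Om_open : open_rt Om.
Hypothesis r_pos : forall r t, Om r t -> 0 < r.
Hypothesis rho_pos : forall r t, Om r t -> 0 < rho r t.
Hypothesis rho_C2 : Ck_on 2 Om rho.
Hypothesis u_C2 : Ck_on 2 Om u.
Hypothesis euler : radial_euler m K 3 rho u Om.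

Lemma euler_mass r t : Om r t ->
  partial_t rho r t = - (u r t * partial_r rho r t + rho r t * partial_r u r t
                         + INR m * rho r t * u r t / r).
Proof.
  intros Hrt. destruct (euler r t Hrt) as [Hmass _].
  assert (Hr := r_pos r t Hrt).
  assert (Hrm : 0 < r ^ m) by (apply pow_lt; exact Hr).
  assert (Dt : partial_t (fun r t => r ^ m * rho r t) r t = r ^ m * partial_t rho r t)
    by apply Derive_scal.
  assert (Dr : partial_r (fun r t => r ^ m * rho r t * u r t) r t
               = (INR m * r ^ m / r * rho r t + r ^ m * partial_r rho r t) * u r t
                 + r ^ m * rho r t * partial_r u r t).
  { apply is_derive_unique. auto_derive.
    - split; [| split]; [eexists; eapply Ck_on_is_derive_r; eauto .. | exact I].
    - rewrite INR_mult_pow_pred by lra. unfold partial_r. ring. }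
  rewrite Dt, Dr in Hmass.
  apply (Rmult_eq_reg_l (r ^ m)); lra.
Qed.

Lemma euler_momentum r t : Om r t ->
  partial_t u r t = - (u r t * partial_r u r t + K * 3 * rho r t * partial_r rho r t).
Proof.
  intros Hrt. destruct (euler r t Hrt) as [_ Hmom].
  assert (Hr := r_pos r t Hrt). assert (Hrho := rho_pos r t Hrt).
  assert (Hrm : 0 < r ^ m * rho r t) by (apply Rmult_lt_0_compat; [apply pow_lt |]; lra).
  assert (Dt : partial_t (fun r t => r ^ m * rho r t * u r t) r t
               = r ^ m * (partial_t rho r t * u r t + rho r t * partial_t u r t)).
  { apply is_derive_unique. auto_derive.
    - split; [| split]; [eexists; eapply Ck_on_is_derive_t; eauto .. | exact I].
    - unfold partial_t. ring. }
  assert (Dr : partial_r (fun r t => r ^ m * rho r t * u r t ^ 2) r t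
               = (INR m * r ^ m / r * rho r t + r ^ m * partial_r rho r t) * u r t ^ 2
                 + r ^ m * rho r t * (2 * u r t * partial_r u r t)).
  { apply is_derive_unique. auto_derive.
    - split; [| split]; [eexists; eapply Ck_on_is_derive_r; eauto .. | exact I].
    - rewrite INR_mult_pow_pred by lra. unfold partial_r. ring. }
  rewrite Dt, Dr, (partial_r_pressure3 1 K rho Om), (euler_mass r t Hrt) in Hmom; auto.
  apply (Rmult_eq_reg_l (r ^ m * rho r t)); lra.
Qed.

Lemma euler_mass_r r t : Om r t ->
  partial_t (partial_r rho) r t =
  - (2 * partial_r u r t * partial_r rho r t + u r t * partial_r (partial_r rho) r t
     + rho r t * partial_r (partial_r u) r t
     + INR m * ((partial_r rho r t * u r t + rho r t * partial_r u r t) / r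
                - rho r t * u r t / r ^ 2)).
Proof.
  intros Hrt. assert (Hr := r_pos r t Hrt).
  rewrite <- (partial_r_partial_t 0 Om) by auto. unfold partial_r at 1.
  rewrite (Derive_ext_loc _ (fun x => - (u x t * partial_r rho x t + rho x t * partial_r u x t
                                         + INR m * rho x t * u x t / x))).
  - apply is_derive_unique. auto_derive.
    + repeat split; try lra; eexists; eapply Ck_on_is_derive_r; eauto using Ck_on_partial_r.
    + unfold partial_r. field. lra.
  - apply (filter_imp (fun x => Om x t)); [| exact (open_rt_locally_r _ _ _ Om_open Hrt)].
    intros x Hx. exact (euler_mass x t Hx).
Qed.

Lemma euler_momentum_r r t : Om r t ->
  partial_t (partial_r u) r t =
  - (partial_r u r t ^ 2 + u r t * partial_r (partial_r u) r t
     + K * 3 * (partial_r rho r t ^ 2 + rho r t * partial_r (partial_r rho) r t)).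
Proof.
  intros Hrt.
  rewrite <- (partial_r_partial_t 0 Om) by auto. unfold partial_r at 1.
  rewrite (Derive_ext_loc _ (fun x => - (u x t * partial_r u x t
                                         + K * 3 * rho x t * partial_r rho x t))).
  - apply is_derive_unique. auto_derive.
    + repeat split; eexists; eapply Ck_on_is_derive_r; eauto using Ck_on_partial_r.
    + unfold partial_r. ring.
  - apply (filter_imp (fun x => Om x t)); [| exact (open_rt_locally_r _ _ _ Om_open Hrt)].
    intros x Hx. exact (euler_momentum x t Hx).
Qed.

Variable s : R.
Hypothesis s_def : s = sqrt (K * 3).

Lemma s_sq : s * s = K * 3.
Proof. rewrite s_def. apply sqrt_sqrt. lra. Qed.

Definition char_speed (sg r t : R) : R := u r t + sg * (s * rho r t).

Definition grad_var (sg r t : R) : R :=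
  partial_r u r t
  + sg * (s * partial_r rho r t + INR m / r * (s * rho r t * u r t / char_speed sg r t)).

Lemma grad_var_derive_along sg sg' (X : R -> R) ts :
  sg = 1 \/ sg = -1 -> sg' = - sg -> Om (X ts) ts -> is_derive X ts (char_speed sg (X ts) ts) ->
  char_speed sg (X ts) ts <> 0 -> char_speed sg' (X ts) ts <> 0 ->
  grad_var sg (X ts) ts = 0 ->
  is_derive (fun t => grad_var sg (X t) t) ts
    (INR m * char_speed sg' (X ts) ts ^ 2 / (2 * X ts * char_speed sg (X ts) ts)
     * grad_var sg' (X ts) ts).
Proof.
  intros Hsg -> Hpt HX Hc Hc' Hzero.
  assert (Hx : X ts <> 0) by (specialize (r_pos _ _ Hpt); lra).
  set (c := char_speed sg (X ts) ts) in *.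
  assert (along : forall n f, Ck_on (S n) Om f ->
            is_derive (fun t => f (X t) t) ts (partial_r f (X ts) ts * c + partial_t f (X ts) ts))
    by (intros n f Hf; exact (is_derive_along_curve n Om f X ts c Om_open Hf Hpt HX)).
  apply (is_derive_transport_at_zero (INR m) sg ts X (fun t => s * rho (X t) t) (fun t => u (X t) t)
           (fun t => s * partial_r rho (X t) t) (fun t => partial_r u (X t) t)
           (s * partial_r (partial_r rho) (X ts) ts) (partial_r (partial_r u) (X ts) ts));
    auto.
  - eapply is_derive_eq; [apply is_derive_scal, (along _ _ rho_C2) |].
    unfold c, char_speed. rewrite euler_mass by exact Hpt. field. exact Hx.
  - eapply is_derive_eq; [apply (along _ _ u_C2) |].
    unfold c, char_speed. rewrite euler_momentum by exact Hpt.
    rewrite <- s_sq. ring.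
  - eapply is_derive_eq; [apply is_derive_scal, (along _ _ (Ck_on_partial_r _ _ _ rho_C2)) |].
    unfold c, char_speed. rewrite euler_mass_r by exact Hpt. field. exact Hx.
  - eapply is_derive_eq; [apply (along _ _ (Ck_on_partial_r _ _ _ u_C2)) |].
    unfold c, char_speed. rewrite euler_momentum_r by exact Hpt.
    rewrite <- s_sq. ring.
Qed.

Lemma hh3 r t : Om r t -> hh K 3 rho r t = s * rho r t.
Proof.
  intros Hrt. unfold hh. rewrite <- s_def. replace ((3 - 1) / 2) with 1 by field.
  rewrite Rpower_1 by exact (rho_pos r t Hrt). reflexivity.
Qed.

Lemma partial_r_hh3 r t : Om r t -> partial_r (hh K 3 rho) r t = s * partial_r rho r t.
Proof.
  intros Hrt. unfold partial_r. rewrite <- Derive_scal. apply Derive_ext_loc.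
  apply (filter_imp (fun x => Om x t)); [| exact (open_rt_locally_r _ _ _ Om_open Hrt)].
  intros x Hx. exact (hh3 x t Hx).
Qed.

Lemma cc2_char_speed r t : Om r t -> cc2 K 3 rho u r t = char_speed 1 r t.
Proof. intros Hrt. unfold cc2, char_speed. rewrite hh3 by exact Hrt. ring. Qed.

Lemma cc1_char_speed r t : Om r t -> cc1 K 3 rho u r t = char_speed (-1) r t.
Proof. intros Hrt. unfold cc1, char_speed. rewrite hh3 by exact Hrt. ring. Qed.

Lemma alpha_grad_var r t : Om r t -> alpha m K 3 rho u r t = grad_var 1 r t.
Proof.
  intros Hrt. unfold alpha, grad_var.
  rewrite partial_r_hh3, hh3, <- cc2_char_speed by exact Hrt. unfold cc2.
  rewrite hh3 by exact Hrt. replace (2 / (3 - 1)) with 1 by field. ring.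
Qed.

Lemma beta_grad_var r t : Om r t -> beta m K 3 rho u r t = grad_var (-1) r t.
Proof.
  intros Hrt. unfold beta, grad_var.
  rewrite partial_r_hh3, hh3, <- cc1_char_speed by exact Hrt. unfold cc1.
  rewrite hh3 by exact Hrt. replace (2 / (3 - 1)) with 1 by field. ring.
Qed.

Hypothesis supersonic : forall r t, Om r t -> 0 < cc1 K 3 rho u r t < cc2 K 3 rho u r t.

Lemma alpha_derive_along_cc2 a b X ts :
  char_curve Om (cc2 K 3 rho u) a b X -> a < ts < b -> alpha m K 3 rho u (X ts) ts = 0 ->
  is_derive (fun t => alpha m K 3 rho u (X t) t) ts
    (INR m * cc1 K 3 rho u (X ts) ts ^ 2 / (2 * X ts * cc2 K 3 rho u (X ts) ts)
     * beta m K 3 rho u (X ts) ts).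
Proof.
  intros HX Hts Hzero. destruct (HX ts Hts) as [Hpt HXder].
  assert (Hspeed := supersonic _ _ Hpt).
  apply (is_derive_ext_loc (fun t => grad_var 1 (X t) t)).
  - apply (filter_imp (fun t => Om (X t) t)); [| exact (char_curve_locally _ _ _ _ _ _ HX Hts)].
    intros t Ht. symmetry. exact (alpha_grad_var _ _ Ht).
  - rewrite cc1_char_speed, cc2_char_speed, beta_grad_var in * by exact Hpt.
    rewrite alpha_grad_var in Hzero by exact Hpt.
    apply grad_var_derive_along; auto; lra.
Qed.

Lemma beta_derive_along_cc1 a b X ts :
  char_curve Om (cc1 K 3 rho u) a b X -> a < ts < b -> beta m K 3 rho u (X ts) ts = 0 ->
  is_derive (fun t => beta m K 3 rho u (X t) t) ts
    (INR m * cc2 K 3 rho u (X ts) ts ^ 2 / (2 * X ts * cc1 K 3 rho u (X ts) ts)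
     * alpha m K 3 rho u (X ts) ts).
Proof.
  intros HX Hts Hzero. destruct (HX ts Hts) as [Hpt HXder].
  assert (Hspeed := supersonic _ _ Hpt).
  apply (is_derive_ext_loc (fun t => grad_var (-1) (X t) t)).
  - apply (filter_imp (fun t => Om (X t) t)); [| exact (char_curve_locally _ _ _ _ _ _ HX Hts)].
    intros t Ht. symmetry. exact (beta_grad_var _ _ Ht).
  - rewrite cc1_char_speed, cc2_char_speed, alpha_grad_var in * by exact Hpt.
    rewrite beta_grad_var in Hzero by exact Hpt.
    apply grad_var_derive_along; auto; lra.
Qed.

End RadialEuler.

Lemma wave_coefficient_pos (a x c c' : R) :
  0 < a -> 0 < x -> 0 < c -> 0 < c' -> 0 < a * c ^ 2 / (2 * x * c').
Proof.
  intros Ha Hx Hc Hc'. apply Rdiv_lt_0_compat.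
  - apply Rmult_lt_0_compat; [exact Ha | apply pow_lt, Hc].
  - apply Rmult_lt_0_compat; lra.
Qed.

Theorem mainTheorem2 :
  forall (m : nat) (K : R) (rho u : R -> R -> R) (Om : R -> R -> Prop),
    (m = 1%nat \/ m = 2%nat) ->
    0 < K ->
    open_rt Om ->
    (forall r t, Om r t -> 0 < r) ->
    smooth_on Om rho ->
    smooth_on Om u ->
    (forall r t, Om r t -> 0 < rho r t) ->
    radial_euler m K 3 rho u Om ->
    (forall r t, Om r t ->
       0 < cc1 K 3 rho u r t /\ cc1 K 3 rho u r t < cc2 K 3 rho u r t) ->
    let al := alpha m K 3 rho u in
    let be := beta m K 3 rho u in
    (* (i) 1-wave R: the 2-wave cannot change from R to C *)
    (forall a b X ts, char_curve Om (cc2 K 3 rho u) a b X -> a < ts < b ->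
       0 < be (X ts) ts -> ~ changes_R_to_C (fun t => al (X t) t) ts) /\
    (* (i) 2-wave R: the 1-wave cannot change from R to C *)
    (forall a b X ts, char_curve Om (cc1 K 3 rho u) a b X -> a < ts < b ->
       0 < al (X ts) ts -> ~ changes_R_to_C (fun t => be (X t) t) ts) /\
    (* (ii) 1-wave C: the 2-wave cannot change from C to R *)
    (forall a b X ts, char_curve Om (cc2 K 3 rho u) a b X -> a < ts < b ->
       be (X ts) ts < 0 -> ~ changes_C_to_R (fun t => al (X t) t) ts) /\
    (* (ii) 2-wave C: the 1-wave cannot change from C to R *)
    (forall a b X ts, char_curve Om (cc1 K 3 rho u) a b X -> a < ts < b ->
       al (X ts) ts < 0 -> ~ changes_C_to_R (fun t => be (X t) t) ts).
Proof.
  intros m K rho u Om Hm HK HO Hr Hrho Hu Hrho_pos Heuler Hsup al be; subst al be.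
  assert (Hm_pos : 0 < INR m) by (destruct Hm as [-> | ->]; simpl; lra).
  assert (Hcoef : forall r t, Om r t ->
            0 < INR m * cc1 K 3 rho u r t ^ 2 / (2 * r * cc2 K 3 rho u r t) /\
            0 < INR m * cc2 K 3 rho u r t ^ 2 / (2 * r * cc1 K 3 rho u r t)).
  { intros r t Hrt. destruct (Hsup r t Hrt). assert (Hr0 := Hr r t Hrt).
    split; apply wave_coefficient_pos; lra. }
  assert (Hrho2 := Hrho 2%nat). assert (Hu2 := Hu 2%nat).
  repeat split; intros a b X ts HX Hts Hsign Hchange;
    destruct (Hcoef (X ts) ts (proj1 (HX ts Hts))) as [H12 H21].
  - eapply not_changes_R_to_C_of_is_derive_pos; [| | exact Hchange].
    + eapply alpha_derive_along_cc2; eauto. apply Hchange.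
    + apply Rmult_lt_0_compat; assumption.
  - eapply not_changes_R_to_C_of_is_derive_pos; [| | exact Hchange].
    + eapply beta_derive_along_cc1; eauto. apply Hchange.
    + apply Rmult_lt_0_compat; assumption.
  - eapply not_changes_C_to_R_of_is_derive_neg; [| | exact Hchange].
    + eapply alpha_derive_along_cc2; eauto. apply Hchange.
    + nra.
  - eapply not_changes_C_to_R_of_is_derive_neg; [| | exact Hchange].
    + eapply beta_derive_along_cc1; eauto. apply Hchange.
    + nra.
Qed.
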